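(* Let a shallow network be given, let $X$ and $Y$ be $\mathbb{R}^{V_0}$- and $\mathbb{R}^{V_2}$-valued random variables, and let $\ell:\mathbb{R}^{V_2}\times\mathbb{R}^{V_2}\to[0,\infty)$ be a $C^1$ function such that $J(\theta)=\mathbb{E}[\ell(\Psi_\theta(X),Y)]$ is $C^1$ on $\Theta$ and differentiation and integration can be interchanged. Let $\theta=(w,\beta)$ exhibit a bias or duplication redundancy, let $\lambda=(\lambda_\emptyset,(\lambda_j)_{j\in V_1})\neq0$ satisfy $\lambda_\emptyset+\sum_{j\in V_1}\lambda_j\psi(\beta_j+\sum_{i\in V_0}x_iw_{ij})=0$ for all $x\in\mathcal{X}$, and define $\theta(t)=(w(t),\beta(t))$, $t\in\mathbb{R}$, by $w_{ij}(t)=w_{ij}$, $\beta_j(t)=\beta_j$ for $i\in V_0,j\in V_1$, and $w_{jk}(t)=w_{jk}+t\lambda_j$, $\beta_k(t)=\beta_k+t\lambda_\emptyset$ for $j\in V_1,k\in V_2$. Then either $\theta(t)$ is a critical point of $J$ for all $t\in\mathbb{R}$, or there is at most one $t\in\mathbb{R}$ for which $\theta(t)$ is a critical point of $J$. If moreover $\#V_2=1$ and $\theta$ has no deactivation redundancy, then $\theta$ being a critical point of $J$ implies that $\theta(t)$ is a critical point of $J$ for all $t\in\mathbb{R}$.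
   Context: Shallow network: finite pairwise disjoint sets $V_0,V_1,V_2$ and activation $\psi$ (differentiable); $E=(V_0\times V_1)\cup(V_1\times V_2)$; $\Theta=\mathbb{R}^E\times\mathbb{R}^{V_1\cup V_2}$, $\theta=(w,\beta)$; response $(\Psi_\theta(x))_l=\beta_l+\sum_{j\in V_1}\psi(\beta_j+\sum_{i\in V_0}x_iw_{ij})w_{jl}$; $w_{j\bullet}=(w_{jl})_{l\in V_2}$, $w_{\bullet j}=(w_{ij})_{i\in V_0}$; $\mathcal{X}$ is the support of the distribution of $X$. Redundancy types: $\theta$ has a deactivation redundancy if $w_{k\bullet}=0$ for some $k\in V_1$; a bias redundancy if for some $k\in V_1$ the function $x\mapsto\psi(\beta_k+\sum_ix_iw_{ik})$ is constant on $\mathcal{X}$; a duplication redundancy if $(w_{\bullet j},\beta_j)=(w_{\bullet k},\beta_k)$ for some $j\neq k\in V_1$. *)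

From HB Require Import structures.
From mathcomp Require Import all_boot all_order all_algebra.
From mathcomp Require Import all_classical all_reals all_analysis.
Set Implicit Arguments. Unset Strict Implicit. Unset Printing Implicit Defensive.
Import Order.TTheory GRing.Theory Num.Theory.
Import numFieldNormedType.Exports.
Local Open Scope classical_set_scope.
Local Open Scope ring_scope.

(* Parameters theta = (w, beta) of a shallow network with
   V0 = 'I_n0, V1 = 'I_n1, V2 = 'I_n2:
   theta = ((W1, W2), (b1, b2)) with
   W1 i j = w_{ij} (i in V0, j in V1), W2 j l = w_{jl} (j in V1, l in V2),
   b1 j = beta_j (j in V1), b2 0 l = beta_l (l in V2). *)
Definition param (R : realType) (n0 n1 n2 : nat) : Type :=
  ('M[R]_(n0, n1) * 'M[R]_(n1, n2)) * ('rV[R]_n1 * 'rV[R]_n2).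

Definition W1 {R : realType} {n0 n1 n2} (th : param R n0 n1 n2) := th.1.1.
Definition W2 {R : realType} {n0 n1 n2} (th : param R n0 n1 n2) := th.1.2.
Definition b1 {R : realType} {n0 n1 n2} (th : param R n0 n1 n2) := th.2.1.
Definition b2 {R : realType} {n0 n1 n2} (th : param R n0 n1 n2) := th.2.2.

Definition preact {R : realType} {n0 n1 n2} (th : param R n0 n1 n2)
  (x : 'rV[R]_n0) (j : 'I_n1) : R :=
  b1 th 0 j + \sum_(i < n0) x 0 i * W1 th i j.

Definition response {R : realType} {n0 n1 n2} (psi : R -> R)
  (th : param R n0 n1 n2) (x : 'rV[R]_n0) : 'rV[R]_n2 :=
  \row_(l < n2) (b2 th 0 l + \sum_(j < n1) psi (preact th x j) * W2 th j l).

Definition dist_support {R : realType} {d} {T : measurableType d} {n0}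
  (P : probability T R) (X : T -> 'rV[R]_n0) : set 'rV[R]_n0 :=
  [set x | forall e : R, 0 < e -> (0 < P (X @^-1` ball x e))%E].

Definition deactivation_redundancy {R : realType} {n0 n1 n2}
  (th : param R n0 n1 n2) : Prop :=
  exists k : 'I_n1, forall l : 'I_n2, W2 th k l = 0.

Definition bias_redundancy {R : realType} {n0 n1 n2} (psi : R -> R)
  (Xsupp : set 'rV[R]_n0) (th : param R n0 n1 n2) : Prop :=
  exists k : 'I_n1, exists c : R,
    forall x, Xsupp x -> psi (preact th x k) = c.

Definition duplication_redundancy {R : realType} {n0 n1 n2}
  (th : param R n0 n1 n2) : Prop :=
  exists j k : 'I_n1, j <> k /\
    (forall i : 'I_n0, W1 th i j = W1 th i k) /\ b1 th 0 j = b1 th 0 k.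

Definition critical_point {R : realType} {n0 n1 n2}
  (J : param R n0 n1 n2 -> R) (th : param R n0 n1 n2) : Prop :=
  forall v : param R n0 n1 n2, 'd J th v = 0.

Definition theta_path {R : realType} {n0 n1 n2} (th : param R n0 n1 n2)
  (lam0 : R) (lam : 'rV[R]_n1) (t : R) : param R n0 n1 n2 :=
  ((W1 th, \matrix_(j < n1, k < n2) (W2 th j k + t * lam 0 j)),
   (b1 th, \row_(k < n2) (b2 th 0 k + t * lam0))).

From HB Require Import structures.
From mathcomp Require Import all_boot all_order all_algebra.
From mathcomp Require Import all_classical all_reals all_analysis.
From mathcomp Require Import ring lra measurable_realfun.

(* Along theta(t) only the output layer moves, by t times lambda, so the
   response changes by t times the left-hand side of the linear relation,
   which vanishes on the support of X: Psi_theta(t)(x) = Psi_theta(x) there.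
   The derivative of the response in a direction v, in contrast, moves by t
   times the derivative of that relation, a quantity independent of t.  The
   support has full measure, so after differentiating under the integral
   t |-> dJ(theta(t)) v is affine for every v; a family of affine functions
   either vanishes identically or has at most one common zero.  When V2 is a
   singleton {l} and every w_{jl} is nonzero, the slope dJ(theta(1)) v -
   dJ(theta) v is itself dJ(theta) v', where v' keeps only the first layer
   of v, with the incoming weights and bias of hidden neuron j scaled by
   lambda_j / w_{jl}; hence it vanishes at a critical point theta. *)
Set Implicit Arguments. Unset Strict Implicit. Unset Printing Implicit Defensive.
Import Order.TTheory GRing.Theory Num.Theory.
Import numFieldNormedType.Exports.
Local Open Scope classical_set_scope.
Local Open Scope ring_scope.

Section line_families.
Variables (R : idomainType) (I : Type) (c : R -> I -> R) (a b : I -> R).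
Hypothesis c_line : forall t i, c t i = (1 - t) * a i + t * b i.

Lemma line_family_zeros :
  (forall t i, c t i = 0) \/
  (forall t1 t2, (forall i, c t1 i = 0) -> (forall i, c t2 i = 0) -> t1 = t2).
Proof.
have c_slope t i : c t i = a i + t * (b i - a i).
  by rewrite c_line mulrBl mul1r mulrBr addrAC addrA.
have [[i ba_neq0]|ba0] := pselect (exists i, b i - a i != 0).
  right=> t1 t2 /(_ i) c1 /(_ i) c2.
  have : (t1 - t2) * (b i - a i) = 0.
    rewrite mulrBl -(addKr (a i) (t1 * _)) -(addKr (a i) (t2 * _)).
    by rewrite -!c_slope c1 c2 subrr.
  by move/eqP; rewrite mulf_eq0 (negbTE ba_neq0) orbF subr_eq0 => /eqP.
have {}ba0 i : b i - a i = 0 by apply: contrapT => /eqP ba_neq0; apply: ba0; exists i.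
have [a0|a_neq0] := pselect (forall i, a i = 0).
  by left=> t i; rewrite c_slope ba0 a0 mulr0 addr0.
right=> t1 t2 c1 _; exfalso; apply: a_neq0 => i.
by move: (c1 i); rewrite c_slope ba0 mulr0 addr0.
Qed.

Lemma line_family_zero_of_slope :
  (forall i, a i = 0) -> (forall i, exists j, b i - a i = a j) -> forall t i, c t i = 0.
Proof.
move=> a0 slope t i; have [j ba] := slope i.
have bi0 : b i = 0 by move: ba; rewrite !a0 subr0.
by rewrite c_line a0 bi0 !mulr0 addr0.
Qed.

End line_families.

Section directional_derivatives.
Variables (R : realFieldType) (V W : normedModType R).

Lemma derive_line (f : V -> W) a v :
  derive f a v = derive (fun h : R => f (h *: v + a)) 0 1.
Proof.
rewrite /derive; set g1 := fun h => _; set g2 := fun h => _.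
suff -> : g1 = g2 by [].
by apply/funext => h; rewrite /g1 /g2 /= scale0r add0r addr0 [_%:A]mulr1.
Qed.

Lemma derive1_comp_diff (r : R -> V) (g : V -> W) t :
  derivable r t 1 -> differentiable g (r t) ->
  derive (g \o r) t 1 = 'd g (r t) (derive r t 1).
Proof.
move=> /derivable1_diffP dr dg.
by rewrite deriveE ?(diff_comp dr dg) ?deriveE//; exact: differentiable_comp.
Qed.

End directional_derivatives.

Lemma is_derive_row (R : realFieldType) (V : normedModType R) n
    (r : V -> 'rV[R]_n) a v (dr : 'rV[R]_n) :
  (forall l, is_derive a v (fun s => r s 0 l) (dr 0 l)) -> is_derive a v r dr.
Proof.
move=> rl; have dr_ : derivable r a v.
  by apply/derivable_mxP => i l; rewrite (ord1 i); have [] := rl l.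
apply: DeriveDef => //; rewrite derive_mx //; apply/matrixP => i l.
by rewrite mxE (ord1 i) derive_val.
Qed.

Lemma is_derive_affine (R : realType) (a c t : R) :
  is_derive t 1 (fun h => a + h * c) c.
Proof.
apply: is_derive_eq.
by rewrite add0r mul1r scaler0 add0r [_%:A]mulr1.
Qed.

Section response_derivative.
Variables (R : realType) (n0 n1 n2 : nat) (psi : R -> R).
Hypothesis psi_derivable : forall z, derivable psi z 1.
Implicit Types (th v : param R n0 n1 n2) (x : 'rV[R]_n0).

Lemma preact_line th v x j h :
  preact (h *: v + th) x j = preact th x j + h * preact v x j.
Proof.
rewrite /preact /b1 /W1 /= !mxE mulrDr mulr_sumr addrACA -big_split /=.
congr (_ + _); first by rewrite addrC.
by apply: eq_bigr => i _; rewrite !mxE mulrDr mulrCA addrC.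
Qed.

Lemma response_line th v x h l :
  response psi (h *: v + th) x 0 l = b2 th 0 l + h * b2 v 0 l +
    \sum_(j < n1) psi (preact th x j + h * preact v x j) * (W2 th j l + h * W2 v j l).
Proof.
rewrite /response /b2 /W2 /= !mxE; congr (_ + _); first by rewrite addrC.
by apply: eq_bigr => j _; rewrite preact_line !mxE addrC.
Qed.

Definition dresponse th x v : 'rV[R]_n2 :=
  \row_l (b2 v 0 l + \sum_(j < n1) ('D_1 psi (preact th x j) * preact v x j * W2 th j l
                                   + psi (preact th x j) * W2 v j l)).

Lemma is_derive_response_line th v x l :
  is_derive (0 : R) 1 (fun h => response psi (h *: v + th) x 0 l) (dresponse th x v 0 l).
Proof.
under [X in is_derive _ _ X]funext do rewrite response_line.
rewrite mxE; apply: is_deriveD; first exact: is_derive_affine.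
rewrite -fct_sumE; apply: is_derive_sum => j.
pose pre h := preact th x j + h * preact v x j.
pose w2 h := W2 th j l + h * W2 v j l.
have pre0 : pre 0 = preact th x j by rewrite /pre mul0r addr0.
have w20 : w2 0 = W2 th j l by rewrite /w2 mul0r addr0.
have psi_pre := is_derive1_comp (derivableP (@psi_derivable (pre 0))) (is_derive_affine _ _ 0).
have prod : is_derive (0 : R) 1 (fun h : R => psi (pre h) * w2 h)
    (psi (pre 0) *: W2 v j l + w2 0 *: ('D_1 psi (pre 0) * preact v x j)).
  exact: is_deriveM psi_pre (is_derive_affine _ _ _).
apply: is_derive_eq prod _.
by rewrite pre0 w20 addrC; congr (_ + _); exact: mulrC.
Qed.

Lemma derive_comp_response (W : normedModType R) (g : 'rV[R]_n2 -> W) th v x :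
  differentiable g (response psi th x) ->
  'D_v (fun u => g (response psi u x)) th = 'd g (response psi th x) (dresponse th x v).
Proof.
move=> dg; pose r h := response psi (h *: v + th) x.
have r0 : r 0 = response psi th x by rewrite /r scale0r add0r.
have dr : is_derive (0 : R) 1 r (dresponse th x v).
  exact: is_derive_row (is_derive_response_line th v x).
rewrite derive_line; change ('D_1 (g \o r) 0 = 'd g (response psi th x) (dresponse th x v)).
by rewrite derive1_comp_diff ?r0 ?derive_val.
Qed.
End response_derivative.

Section support.
Variable R : realType.

Lemma ball_rowP n (c y : 'rV[R]_n) e :
  ball c e y <-> 0 < e /\ forall j, `|c 0 j - y 0 j| < e.
Proof.
split=> -[e0 cy]; split=> //; first exact: cy 0.
by move=> i j; rewrite (ord1 i); exact: cy.
Qed.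

Lemma measurable_preimage_ball d (T : measurableType d) n (X : T -> 'rV[R]_n) c e :
  (forall i, measurable_fun setT (fun w => X w 0 i)) ->
  measurable (X @^-1` ball c e).
Proof.
move=> mX; have [e0|e0] := ltP 0 e; last first.
  suff -> : X @^-1` ball c e = set0 by [].
  by apply/seteqP; split => // w /= /ball_rowP[]; lra.
have -> : X @^-1` ball c e = \bigcap_(j in [set: 'I_n]) [set w | `|c 0 j - X w 0 j| < e].
  apply/seteqP; split=> w /=; first by move=> /ball_rowP[_ cX] j _; exact: cX.
  by move=> cX; apply/ball_rowP; split=> // j; exact: cX.
apply: fin_bigcap_measurable; first exact: finite_finset.
move=> j _; rewrite -[X in measurable X]setTI.
have : measurable_fun setT (fun w => `|c 0 j - X w 0 j|).
  by apply: measurableT_comp; [exact: normr_measurable | exact: measurable_funB].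
move=> /(_ measurableT [set` `]-oo, e[] (measurable_itv _)).
by congr measurable; apply/seteqP; split=> w /=; rewrite in_itv.
Qed.

Definition grid_ball n (kz : nat * 'rV[int]_n) : set 'rV[R]_n :=
  ball (\row_j ((kz.2 0 j)%:~R / kz.1.+1%:R) : 'rV[R]_n) kz.1.+1%:R^-1.

Lemma floor_div_approx (K x : R) : 0 < K ->
  `|(Num.floor (K * x))%:~R / K - x| < K^-1.
Proof.
move=> K0; set f : R := (Num.floor (K * x))%:~R.
have f_le : f <= K * x by exact: Num.Theory.floor_le.
have f_gt : K * x < f + 1 by have := Num.Theory.floorD1_gt (K * x); rewrite intrD.
have -> : f / K - x = (f - K * x) / K by field; rewrite gt_eqF.
rewrite normrM normfV (gtr0_norm K0) -[X in _ < X]mul1r ltr_pM2r ?invr_gt0 //.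
by rewrite ler0_norm; lra.
Qed.

Lemma grid_ball_sub_ball n (x : 'rV[R]_n) e : 0 < e ->
  exists kz, grid_ball kz x /\ grid_ball kz `<=` ball x e.
Proof.
move=> e0; pose k := Num.truncn (2 / e); pose K : R := k.+1%:R.
have K0 : 0 < K by rewrite ltr0Sn.
have Ke : 2 / K < e.
  by have := Num.Theory.truncnS_gt (2 / e); rewrite ltr_pdivrMr // mulrC -ltr_pdivrMr.
pose z : 'rV[int]_n := \row_j Num.floor (K * x 0 j).
have zx j : `|(z 0 j)%:~R / K - x 0 j| < K^-1 by rewrite mxE; exact: floor_div_approx.
exists (k, z); split.
  by apply/ball_rowP; split=> [|j]; rewrite ?invr_gt0 // mxE.
move=> y /ball_rowP[_ zy]; apply/ball_rowP; split=> // j.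
move: (zy j); rewrite mxE => zyj.
rewrite -(subrKA ((z 0 j)%:~R / K)) (le_lt_trans (ler_normD _ _)) // distrC.
by rewrite (lt_trans (ltrD (zx j) zyj)) // -mulr2n -mulr_natl.
Qed.

(* The grid balls form a countable family, and every point off the support
   lies in one of them that has null preimage. *)
Lemma ae_dist_support d (T : measurableType d) (P : probability T R) n
    (X : T -> 'rV[R]_n) :
  (forall i, measurable_fun setT (fun w => X w 0 i)) ->
  {ae P, forall w, dist_support P X (X w)}.
Proof.
move=> mX; pose B kz := X @^-1` grid_ball kz.
pose N m := if unpickle m is Some kz then (if P (B kz) == 0%E then B kz else set0)
            else set0.
apply: (@negligibleS _ _ _ _ (\bigcup_m N m)); last first.
  apply: negligible_bigcup => m; rewrite /N.
  case: (unpickle m) => [kz|]; last exact: negligible_set0.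
  case: eqP => [PB0|_]; last exact: negligible_set0.
  by exists (B kz); split=> //; exact: measurable_preimage_ball.
move=> w /= notsupp.
have [e e0 Pe] : exists2 e : R, 0 < e & P (X @^-1` ball (X w) e) = 0%E.
  apply: contrapT => Ppos; apply: notsupp => e e0.
  by rewrite lt0e measure_ge0 andbT; apply/eqP => Pe; apply: Ppos; exists e.
have [kz [Bw Be]] := grid_ball_sub_ball (X w) e0.
have PB : P (B kz) = 0%E.
  apply/eqP; rewrite -measure_le0 -Pe le_measure ?inE //;
    [exact: measurable_preimage_ball | exact: measurable_preimage_ball |].
  by move=> y; exact: Be.
by exists (pickle kz) => //; rewrite /N pickleK PB eqxx.
Qed.

End support.

Lemma differentiable_partial1 (R : numFieldType) (U V W : normedModType R)
    (f : U -> V -> W) (a : U) (y : V) :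
  differentiable (fun q : U * V => f q.1 q.2) (a, y) -> differentiable (f ^~ y) a.
Proof.
by move=> df; apply: (@differentiable_comp _ _ _ _ (fun b => (b, y)) (fun q => f q.1 q.2)).
Qed.

Lemma ae_lincomb_integral (R : realType) d (T : measurableType d)
    (mu : {measure set T -> \bar R}) (f g h : T -> R) (a b If Ig Ih : R) :
  mu.-integrable setT (EFin \o f) -> mu.-integrable setT (EFin \o g) ->
  mu.-integrable setT (EFin \o h) ->
  (\int[mu]_w (f w)%:E = If%:E)%E -> (\int[mu]_w (g w)%:E = Ig%:E)%E ->
  (\int[mu]_w (h w)%:E = Ih%:E)%E ->
  {ae mu, forall w, f w = a * g w + b * h w} -> If = a * Ig + b * Ih.
Proof.
move=> if_ ig ih intf intg inth fgh; apply: EFin_inj.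
have iag : mu.-integrable setT (fun w => a%:E * (g w)%:E)%E by exact: integrableZl.
have ibh : mu.-integrable setT (fun w => b%:E * (h w)%:E)%E by exact: integrableZl.
rewrite EFinD !EFinM -intf -intg -inth -(integralZl measurableT ig).
rewrite -(integralZl measurableT ih) -(integralD measurableT iag ibh).
apply: ae_eq_integral => //; first exact: measurable_int if_.
  exact: measurable_int (integrableD measurableT iag ibh).
by apply: filterS fgh => w -> _; rewrite EFinD !EFinM.
Qed.

Section theta_path.
Variables (R : realType) (n0 n1 n2 : nat) (psi : R -> R).
Variables (th : param R n0 n1 n2) (lam0 : R) (lam : 'rV[R]_n1).
Implicit Types (x : 'rV[R]_n0) (v : param R n0 n1 n2).

Definition drelation x v :=
  \sum_(j < n1) lam 0 j * 'D_1 psi (preact th x j) * preact v x j.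

Lemma response_theta_path t x :
  lam0 + \sum_(j < n1) lam 0 j * psi (preact th x j) = 0 ->
  response psi (theta_path th lam0 lam t) x = response psi th x.
Proof.
move=> rel; apply/matrixP => i l; rewrite (ord1 i) !mxE.
rewrite (eq_bigr (fun j => psi (preact th x j) * W2 th j l + t * (lam 0 j * psi (preact th x j)))).
  by rewrite big_split /= -mulr_sumr addrACA -mulrDr rel mulr0 addr0.
by move=> j _; rewrite /W2 /= mxE; ring.
Qed.

Lemma dresponse_theta_path t x v :
  dresponse psi (theta_path th lam0 lam t) x v =
  dresponse psi th x v + (t * drelation x v) *: const_mx 1.
Proof.
apply/matrixP => i l; rewrite (ord1 i) !mxE /drelation.
rewrite (eq_bigr (fun j => ('D_1 psi (preact th x j) * preact v x j * W2 th j l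
   + psi (preact th x j) * W2 v j l) + t * (lam 0 j * 'D_1 psi (preact th x j) * preact v x j))).
  by rewrite big_split /= -mulr_sumr addrA mulr1.
by move=> j _; rewrite /W2 /= mxE; ring.
Qed.

Definition drelation_dir (l0 : 'I_n2) v : param R n0 n1 n2 :=
  ((\matrix_(i, j) (W1 v i j * lam 0 j / W2 th j l0), 0),
   (\row_j (b1 v 0 j * lam 0 j / W2 th j l0), 0)).

Lemma dresponse_drelation_dir l0 x v : (forall j, W2 th j l0 != 0) ->
  dresponse psi th x (drelation_dir l0 v) 0 l0 = drelation x v.
Proof.
move=> W2_neq0; rewrite /dresponse /drelation mxE /b2 /= mxE add0r.
apply: eq_bigr => j _; rewrite /W2 /= mxE mulr0 addr0.
have -> : preact (drelation_dir l0 v) x j = preact v x j * lam 0 j / W2 th j l0.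
  rewrite /preact /b1 /W1 /= mxE !mulrDl !mulr_suml; congr (_ + _).
  by apply: eq_bigr => i _; rewrite mxE !mulrA.
by field.
Qed.

End theta_path.

Section critical_points_along_theta_path.
Variables (R : realType) (n0 n1 n2 : nat) (psi : R -> R).
Variables (d : measure_display) (T : measurableType d) (P : probability T R).
Variables (X : T -> 'rV[R]_n0) (Y : T -> 'rV[R]_n2).
Variables (loss : 'rV[R]_n2 -> 'rV[R]_n2 -> R) (J : param R n0 n1 n2 -> R).
Hypothesis psi_derivable : forall z, derivable psi z 1.
Hypothesis X_measurable : forall i, measurable_fun setT (fun w => X w 0 i).
Hypothesis loss_differentiable : forall p : 'rV[R]_n2 * 'rV[R]_n2,
  differentiable (fun q : 'rV[R]_n2 * 'rV[R]_n2 => loss q.1 q.2) p.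

Let dloss (th v : param R n0 n1 n2) w := 'D_v (fun u => loss (response psi u (X w)) (Y w)) th.

Hypothesis dJ_integral : forall th v : param R n0 n1 n2,
  P.-integrable setT (fun w => (dloss th v w)%:E) /\
  (\int[P]_w (dloss th v w)%:E = ('d J th v)%:E)%E.

Variables (th : param R n0 n1 n2) (lam0 : R) (lam : 'rV[R]_n1).
Hypothesis relation : forall x, dist_support P X x ->
  lam0 + \sum_(j < n1) lam 0 j * psi (preact th x j) = 0.

Let th1 := theta_path th lam0 lam 1.

Lemma dloss_response th' v w :
  dloss th' v w = 'd (fun a => loss a (Y w)) (response psi th' (X w))
                     (dresponse psi th' (X w) v).
Proof.
by apply: derive_comp_response => //; exact: differentiable_partial1.
Qed.

Lemma dloss_theta_path t v w : dist_support P X (X w) ->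
  dloss (theta_path th lam0 lam t) v w = (1 - t) * dloss th v w + t * dloss th1 v w.
Proof.
move=> Xw; rewrite !dloss_response !response_theta_path ?relation //.
rewrite !dresponse_theta_path !linearD !linearZ /=.
rewrite -![_ *: _ _]/(_ * _); ring.
Qed.

Lemma dJ_theta_path t v :
  'd J (theta_path th lam0 lam t) v = (1 - t) * 'd J th v + t * 'd J th1 v.
Proof.
have [int_t dJ_t] := dJ_integral (theta_path th lam0 lam t) v.
have [int_0 dJ_0] := dJ_integral th v.
have [int_1 dJ_1] := dJ_integral th1 v.
have ae_path : {ae P, forall w, dloss (theta_path th lam0 lam t) v w =
                                (1 - t) * dloss th v w + t * dloss th1 v w}.
  by apply: filterS (ae_dist_support P X_measurable) => w; exact: dloss_theta_path.
exact: ae_lincomb_integral int_t int_0 int_1 dJ_t dJ_0 dJ_1 ae_path.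
Qed.

Lemma dJ_slope_single_output l0 v :
  (forall l : 'I_n2, l = l0) -> (forall j, W2 th j l0 != 0) ->
  'd J th (drelation_dir th lam l0 v) = 'd J th1 v - 'd J th v.
Proof.
move=> l0_only W2_neq0; pose v' := drelation_dir th lam l0 v.
have [int_0 dJ_0] := dJ_integral th v.
have [int_1 dJ_1] := dJ_integral th1 v.
have [int_v' dJ_v'] := dJ_integral th v'.
have ae_slope : {ae P, forall w, dloss th v' w = (-1) * dloss th v w + 1 * dloss th1 v w}.
  apply: filterS (ae_dist_support P X_measurable) => w Xw.
  have dir : dresponse psi th (X w) v' = drelation psi th lam (X w) v *: const_mx 1.
    apply/matrixP => i l; rewrite (ord1 i) (l0_only l) dresponse_drelation_dir //.
    by rewrite !mxE mulr1.
  rewrite !dloss_response /th1 response_theta_path ?relation //.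
  rewrite dresponse_theta_path dir linearD !linearZ /=.
  rewrite -![_ *: _ _]/(_ * _); ring.
have dJ_v'_lincomb := ae_lincomb_integral int_v' int_0 int_1 dJ_v' dJ_0 dJ_1 ae_slope.
by rewrite mulN1r mul1r addrC in dJ_v'_lincomb.
Qed.
End critical_points_along_theta_path.

Theorem theorem4p2 (R : realType) (n0 n1 n2 : nat) (psi : R -> R)
  (d : measure_display) (T : measurableType d) (P : probability T R)
  (X : T -> 'rV[R]_n0) (Y : T -> 'rV[R]_n2)
  (loss : 'rV[R]_n2 -> 'rV[R]_n2 -> R) (J : param R n0 n1 n2 -> R)
  (th : param R n0 n1 n2) (lam0 : R) (lam : 'rV[R]_n1) :
  (* psi is differentiable *)
  (forall z : R, derivable psi z 1) ->
  (* X and Y are random variables *)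
  (forall i : 'I_n0, measurable_fun setT (fun w => X w 0 i)) ->
  (forall k : 'I_n2, measurable_fun setT (fun w => Y w 0 k)) ->
  (* loss : R^V2 x R^V2 -> [0, oo) is C^1 *)
  (forall a b, 0 <= loss a b) ->
  (forall p : 'rV[R]_n2 * 'rV[R]_n2,
      differentiable (fun q : 'rV[R]_n2 * 'rV[R]_n2 => loss q.1 q.2) p) ->
  (forall v : 'rV[R]_n2 * 'rV[R]_n2,
      continuous (fun p : 'rV[R]_n2 * 'rV[R]_n2 =>
        'd (fun q : 'rV[R]_n2 * 'rV[R]_n2 => loss q.1 q.2) p v)) ->
  (* J(theta) = E[loss(Psi_theta(X), Y)] *)
  (forall th' : param R n0 n1 n2,
      (\int[P]_w (loss (response psi th' (X w)) (Y w))%:E = (J th')%:E)%E) ->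
  (* J is C^1 on Theta *)
  (forall th' : param R n0 n1 n2, differentiable J th') ->
  (forall v : param R n0 n1 n2, continuous (fun th' => 'd J th' v)) ->
  (* differentiation and integration can be interchanged *)
  (forall (th' v : param R n0 n1 n2),
      P.-integrable setT
        (fun w => (derive (fun u => loss (response psi u (X w)) (Y w)) th' v)%:E)
      /\ (\int[P]_w
            (derive (fun u => loss (response psi u (X w)) (Y w)) th' v)%:E
          = ('d J th' v)%:E)%E) ->
  (* theta has a bias or duplication redundancy *)
  (bias_redundancy psi (dist_support P X) th \/ duplication_redundancy th) ->
  (* lambda <> 0 and the linear relation holds on the support of X *)
  (lam0 <> 0 \/ lam <> 0) ->
  (forall x, dist_support P X x ->
      lam0 + \sum_(j < n1) lam 0 j * psi (preact th x j) = 0) ->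
  ((forall t : R, critical_point J (theta_path th lam0 lam t))
   \/ (forall t1 t2 : R, critical_point J (theta_path th lam0 lam t1) ->
                        critical_point J (theta_path th lam0 lam t2) -> t1 = t2))
  /\
  (n2 = 1%N -> ~ deactivation_redundancy th -> critical_point J th ->
     forall t : R, critical_point J (theta_path th lam0 lam t)).
Proof.
(* The redundancy of theta only guarantees that some lambda exists; the
   argument uses nothing but the relation lambda satisfies. *)
move=> psi_derivable X_measurable _ _ loss_differentiable _ _ _ _ dJ_integral _ _ relation.
have dJ_path := dJ_theta_path psi_derivable X_measurable loss_differentiable
  dJ_integral relation.
split.
  have [zero | once] := line_family_zeros dJ_path.
    by left=> t v; exact: zero.
  by right=> t1 t2 crit1 crit2; exact: once crit1 crit2.
move=> n2_1 no_deactivation crit; apply: line_family_zero_of_slope dJ_path crit _.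
have l0 : 'I_n2 by rewrite n2_1; exact: ord0.
have l0_only (l : 'I_n2) : l = l0.
  have lt1 (k : 'I_n2) : (k < 1)%N by rewrite -n2_1 ltn_ord.
  by apply: ord_inj; move: (lt1 l) (lt1 l0); rewrite !ltnS !leqn0 => /eqP-> /eqP->.
have W2_neq0 j : W2 th j l0 != 0.
  by apply/eqP => W2_0; apply: no_deactivation; exists j => l; rewrite (l0_only l).
move=> v; exists (drelation_dir th lam l0 v); apply: esym.
exact: (dJ_slope_single_output psi_derivable X_measurable loss_differentiable
  dJ_integral relation v l0_only W2_neq0).
Qed.
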